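(* Let $G_i=(V_i,E_i)$ be a graph of minimum degree $\delta_i$ and maximum degree $\Delta_i$, $i\in\{1,2\}$. For integers $k_1,k_2$, let $S_i$ be a $k_i$-oaf set in $G_i$, $i\in\{1,2\}$, and let $$k'=\max\{k_1-\delta_2,\;k_2-\delta_1,\;\min\{k_2+\Delta_1,\,k_1+\Delta_2\}\}.$$ Then for every integer $k\in\{k',\dots,\Delta_1+\Delta_2\}$, the set $(S_1\times V_2)\cup(V_1\times S_2)$ is a $k$-oaf set in $G_1\times G_2$.
   Context: All graphs are finite and simple. For a graph $G=(V,E)$, a set $S\subseteq V$ and $v\in V$, let $\delta_S(v)=|\{u\in S: uv\in E\}|$, $\overline{S}=V\setminus S$, and let $\partial S$ be the set of vertices of $\overline S$ adjacent to at least one vertex of $S$. For an integer $k$, a non-empty set $S\subseteq V$ is an offensive $k$-alliance if $\delta_S(v)\ge \delta_{\overline S}(v)+k$ for every $v\in \partial S$. A set $X\subseteq V$ is an offensive $k$-alliance free set ($k$-oaf set) if no offensive $k$-alliance $S$ satisfies $S\subseteq X$. The Cartesian product $G_1\times G_2$ of $G_1=(V_1,E_1)$, $G_2=(V_2,E_2)$ has vertex set $V_1\times V_2$, with $(a,b)$ adjacent to $(c,d)$ iff either $a=c$ and $bd\in E_2$, or $b=d$ and $ac\in E_1$. *)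

From HB Require Import structures.
From mathcomp Require Import all_boot all_order all_algebra.
Set Implicit Arguments. Unset Strict Implicit. Unset Printing Implicit Defensive.
Import Order.TTheory GRing.Theory Num.Theory.

(* A finite simple graph: vertex set a finType T, adjacency e : rel T,
   assumed symmetric and irreflexive (hypotheses in the theorem). *)

Section Graphs.
Variable T : finType.
Variable e : rel T.

Definition deg_in (S : {set T}) (v : T) : nat := #|[set u in S | e v u]|.
Definition deg (v : T) : nat := deg_in [set: T] v.

(* minimum / maximum degree (for an empty vertex set these are #|T| = 0 / 0) *)
Definition min_deg : nat := \big[minn/#|T|]_(v : T) deg v.
Definition max_deg : nat := \max_(v : T) deg v.

Definition boundary (S : {set T}) : {set T} :=
  [set v | (v \notin S) && [exists u in S, e v u]].

Definition off_alliance (S : {set T}) (k : int) : Prop :=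
  S != set0 /\
  forall v, v \in boundary S ->
    ((deg_in (~: S) v)%:Z + k <= (deg_in S v)%:Z)%R.

Definition k_oaf (X : {set T}) (k : int) : Prop :=
  forall S : {set T}, S \subset X -> ~ off_alliance S k.
End Graphs.

Definition cart_rel (T1 T2 : finType) (e1 : rel T1) (e2 : rel T2) : rel (T1 * T2) :=
  fun x y => ((x.1 == y.1) && e2 x.2 y.2) || ((x.2 == y.2) && e1 x.1 y.1).

From mathcomp Require Import all_boot all_order all_algebra.
From mathcomp Require Import zify.
Import Order.TTheory GRing.Theory Num.Theory.
Set Implicit Arguments. Unset Strict Implicit. Unset Printing Implicit Defensive.
Local Open Scope ring_scope.

(* Let X = (S1 x V2) u (V1 x S2) and suppose some offensive k-alliance S is
   contained in X.  Assume first k >= k2 + Delta1 and k >= k1 - delta2.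
   - For a in V1, the G2-layer {b | (a,b) in S} is empty whenever a is not in
     S1: otherwise it is a non-empty subset of S2, so (S2 being k2-oaf) it has
     a boundary vertex b violating the k2-alliance inequality, and at (a,b)
     the k-alliance inequality of S then forces k < k2 + Delta1.
   - Hence the projection P of S onto V1 is a non-empty subset of S1, so it
     has a boundary vertex a' violating the k1-alliance inequality; at (a',b),
     where (a,b) in S and a ~ a', the k-alliance inequality forces
     k < k1 - delta2.
   The case k >= k1 + Delta2, k >= k2 - delta1 is the same statement for
   G2 x G1, to which we transfer along the isomorphism (a,b) |-> (b,a); the
   transfer uses that offensive alliances are preserved by isomorphisms. *)

Section Degrees.
Variables (T : finType) (e : rel T).

Lemma deg_in_subset {A B : {set T}} v :
  A \subset B -> (deg_in e A v <= deg_in e B v)%N.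
Proof.
move=> sAB; apply: subset_leq_card; apply/subsetP => u.
by rewrite !inE => /andP[/(subsetP sAB) -> ->].
Qed.

Lemma deg_in_set0 v : deg_in e set0 v = 0%N.
Proof. by apply/eqP; rewrite cards_eq0; apply/eqP/setP => u; rewrite !inE. Qed.

Lemma deg_in_le_max_deg (A : {set T}) v : (deg_in e A v <= max_deg e)%N.
Proof.
apply: leq_trans (deg_in_subset v (subsetT A)) _.
by rewrite /max_deg (bigD1 v) //= leq_maxl.
Qed.

Lemma min_deg_le_deg v : (min_deg e <= deg e v)%N.
Proof. by rewrite /min_deg -minEnat; apply: (@bigmin_le _ nat). Qed.

Lemma boundaryI (S : {set T}) u v :
  v \notin S -> u \in S -> e v u -> v \in boundary e S.
Proof. by move=> vS uS evu; rewrite inE vS; apply/exists_inP; exists u. Qed.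

Lemma oaf_witness (X A : {set T}) (k : int) :
  k_oaf e X k -> A \subset X -> A != set0 ->
  exists2 v, v \in boundary e A &
             (deg_in e A v)%:Z < (deg_in e (~: A) v)%:Z + k.
Proof.
move=> oafX sAX nA0.
have [/exists_inP[v vA ltA] | /exists_inPn noW] :=
  boolP [exists v in boundary e A,
           (deg_in e A v)%:Z < (deg_in e (~: A) v)%:Z + k].
  by exists v.
by case: (oafX A sAX); split=> // v vA; rewrite leNgt; apply: noW.
Qed.
End Degrees.

Section Isomorphism.
Variables (T T' : finType) (e : rel T) (e' : rel T') (f : T' -> T).
Hypothesis f_bij : bijective f.
Hypothesis f_adj : forall u v, e' u v = e (f u) (f v).

Lemma deg_in_preim (A : {set T}) v : deg_in e' (f @^-1: A) v = deg_in e A (f v).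
Proof.
rewrite /deg_in -(on_card_preimset (onW_bij _ f_bij)).
by apply: eq_card => u; rewrite !inE f_adj.
Qed.

Lemma boundary_preim (A : {set T}) v :
  (v \in boundary e' (f @^-1: A)) = (f v \in boundary e A).
Proof.
rewrite !inE; congr (_ && _); have [g fK gK] := f_bij.
apply/exists_inP/exists_inP => [[u uA evu] | [w wA evw]].
  by exists (f u); [move: uA; rewrite inE | rewrite -f_adj].
by exists (g w); [rewrite inE gK | rewrite f_adj gK].
Qed.

Lemma off_alliance_preim (A : {set T}) k :
  off_alliance e A k -> off_alliance e' (f @^-1: A) k.
Proof.
case=> nA0 allA; split.
  have [g _ gK] := f_bij; case/set0Pn: nA0 => w wA.
  by apply/set0Pn; exists (g w); rewrite inE gK.
by move=> v; rewrite boundary_preim -preimsetC !deg_in_preim; apply: allA.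
Qed.
End Isomorphism.

Section Cartesian.
Variables (T1 T2 : finType) (e1 : rel T1) (e2 : rel T2).
Hypotheses (irr1 : irreflexive e1) (irr2 : irreflexive e2).

Local Notation G := (cart_rel e1 e2).

Definition layer1 (S : {set T1 * T2}) (b : T2) : {set T1} := [set a | (a, b) \in S].
Definition layer2 (S : {set T1 * T2}) (a : T1) : {set T2} := [set b | (a, b) \in S].
Definition support1 (S : {set T1 * T2}) : {set T1} := [set a | layer2 S a != set0].

Lemma layer1C S b : layer1 (~: S) b = ~: layer1 S b.
Proof. by apply/setP => a; rewrite !inE. Qed.

Lemma layer2C S a : layer2 (~: S) a = ~: layer2 S a.
Proof. by apply/setP => b; rewrite !inE. Qed.

Lemma cart_adj1 a a' b : G (a, b) (a', b) = e1 a a'.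
Proof. by rewrite /cart_rel /= eqxx irr2 andbF. Qed.

Lemma cart_adj2 a b b' : G (a, b) (a, b') = e2 b b'.
Proof. by rewrite /cart_rel /= eqxx irr1 andbF orbF. Qed.

Lemma deg_cart (S : {set T1 * T2}) a b :
  deg_in G S (a, b) = (deg_in e1 (layer1 S b) a + deg_in e2 (layer2 S a) b)%N.
Proof.
rewrite /deg_in.
set A := [set a' in layer1 S b | e1 a a'].
set B := [set b' in layer2 S a | e2 b b'].
have memA x y : ((x, y) \in (fun a' => (a', b)) @: A) = (y == b) && (x \in A).
  apply/imsetP/andP => [[a' Ha' [-> ->]] | [/eqP -> Hx]]; first by rewrite eqxx.
  by exists x.
have memB x y : ((x, y) \in (fun b' => (a, b')) @: B) = (x == a) && (y \in B).
  apply/imsetP/andP => [[b' Hb' [-> ->]] | [/eqP -> Hy]]; first by rewrite eqxx.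
  by exists y.
have -> : [set u in S | G (a, b) u] =
          (fun a' => (a', b)) @: A :|: (fun b' => (a, b')) @: B.
  apply/setP => [[x y]]; rewrite inE in_setU memA memB !inE /cart_rel /=.
  case: (eqVneq a x) => [<- | _]; case: (eqVneq b y) => [<- | _] /=;
    by rewrite ?irr1 ?irr2 ?andbF ?andbT ?orbF.
have disjAB : (fun a' => (a', b)) @: A :&: (fun b' => (a, b')) @: B = set0.
  apply/setP => [[x y]]; rewrite in_setI memA memB inE.
  by case: (eqVneq x a) => [-> | _]; rewrite in_set0 ?irr1 ?andbF ?andFb.
by rewrite cardsU disjAB cards0 subn0 !card_imset // => ? ? [].
Qed.

Lemma alliance_layer2_empty (S : {set T1 * T2}) (X2 : {set T2}) k k2 a :
  off_alliance G S k -> k2 + (max_deg e1)%:Z <= k -> k_oaf e2 X2 k2 ->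
  layer2 S a \subset X2 -> layer2 S a = set0.
Proof.
move=> [_ allS] hk oaf2 sub; apply/eqP/negPn/negP => ne.
have [b bB lt_b] := oaf_witness oaf2 sub ne.
have abB : (a, b) \in boundary G S.
  move: bB; rewrite inE => /andP[bS /exists_inP[b' b'S ebb']].
  apply: (@boundaryI _ _ _ (a, b')); rewrite ?cart_adj2 //.
  - by move: bS; rewrite inE.
  - by move: b'S; rewrite inE.
have := allS _ abB; rewrite !deg_cart layer2C.
have := deg_in_le_max_deg e1 (layer1 S b) a.
lia.
Qed.

Lemma alliance_support1_not_in_oaf (S : {set T1 * T2}) (X1 : {set T1}) k k1 :
  off_alliance G S k -> k1 - (min_deg e2)%:Z <= k -> k_oaf e1 X1 k1 ->
  ~ support1 S \subset X1.
Proof.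
move=> [nS0 allS] hk oaf1 sub.
have ne : support1 S != set0.
  case/set0Pn: nS0 => [[a b] abS]; apply/set0Pn; exists a.
  by rewrite inE; apply/set0Pn; exists b; rewrite inE.
have [a' a'B lt_a'] := oaf_witness oaf1 sub ne.
move: a'B; rewrite inE => /andP[a'P /exists_inP[a aP ea]].
have [b abS] : exists b, (a, b) \in S.
  by move: aP; rewrite inE => /set0Pn[b]; rewrite inE; exists b.
have empty_a' : layer2 S a' = set0 by move: a'P; rewrite inE negbK => /eqP.
have a'bB : (a', b) \in boundary G S.
  apply: (@boundaryI _ _ _ (a, b)); rewrite ?cart_adj1 //.
  have : b \notin layer2 S a' by rewrite empty_a' inE.
  by rewrite inE.
have := allS _ a'bB.
rewrite !deg_cart layer2C empty_a' setC0 deg_in_set0 layer1C.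
have sub1 : layer1 S b \subset support1 S.
  by apply/subsetP => x; rewrite !inE => xbS; apply/set0Pn; exists b; rewrite inE.
have csub1 : ~: support1 S \subset ~: layer1 S b by rewrite setCS.
have := deg_in_subset e1 a' sub1.
have := deg_in_subset e1 a' csub1.
have := min_deg_le_deg e2 b; rewrite /deg.
lia.
Qed.

Lemma union_oaf_cart (k1 k2 k : int) (S1 : {set T1}) (S2 : {set T2}) :
  k_oaf e1 S1 k1 -> k_oaf e2 S2 k2 ->
  k2 + (max_deg e1)%:Z <= k -> k1 - (min_deg e2)%:Z <= k ->
  k_oaf G [set x | (x.1 \in S1) || (x.2 \in S2)] k.
Proof.
move=> oaf1 oaf2 hk2 hk1 S sSX allS.
apply: (alliance_support1_not_in_oaf allS hk1 oaf1).
apply/subsetP => a; rewrite inE => ne; apply/negPn/negP => aS1.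
have sub : layer2 S a \subset S2.
  by apply/subsetP => b; rewrite inE => /(subsetP sSX); rewrite inE /= (negbTE aS1).
by rewrite (alliance_layer2_empty allS hk2 oaf2 sub) eqxx in ne.
Qed.
End Cartesian.

Definition swap_pair {T1 T2 : Type} (x : T1 * T2) : T2 * T1 := (x.2, x.1).

Lemma k_oaf_swap (T1 T2 : finType) (e1 : rel T1) (e2 : rel T2)
  (X : {set T1 * T2}) (k : int) :
  k_oaf (cart_rel e2 e1) (swap_pair @^-1: X) k -> k_oaf (cart_rel e1 e2) X k.
Proof.
move=> oafX S sSX allS; apply: (oafX (swap_pair @^-1: S)).
  exact: preimsetS.
apply: off_alliance_preim allS.
  by exists swap_pair => -[].
by move=> u v; rewrite /cart_rel orbC.
Qed.

Lemma union_oaf_cart_swap (T1 T2 : finType) (e1 : rel T1) (e2 : rel T2)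
  (irr1 : irreflexive e1) (irr2 : irreflexive e2)
  (k1 k2 k : int) (S1 : {set T1}) (S2 : {set T2}) :
  k_oaf e1 S1 k1 -> k_oaf e2 S2 k2 ->
  k1 + (max_deg e2)%:Z <= k -> k2 - (min_deg e1)%:Z <= k ->
  k_oaf (cart_rel e1 e2) [set x | (x.1 \in S1) || (x.2 \in S2)] k.
Proof.
move=> oaf1 oaf2 hk1 hk2; apply: k_oaf_swap.
have -> : swap_pair @^-1: [set x | (x.1 \in S1) || (x.2 \in S2)] =
          [set y | (y.1 \in S2) || (y.2 \in S1)].
  by apply/setP => y; rewrite !inE orbC.
exact: (union_oaf_cart irr2 irr1 oaf2 oaf1 hk1 hk2).
Qed.

(* The hypotheses k <= Delta1 + Delta2 and symmetry of the adjacency relations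
   only make the statement meaningful; the proof does not need them. *)
Theorem theorem4 (T1 T2 : finType) (e1 : rel T1) (e2 : rel T2)
  (sym1 : symmetric e1) (irr1 : irreflexive e1)
  (sym2 : symmetric e2) (irr2 : irreflexive e2)
  (k1 k2 : int) (S1 : {set T1}) (S2 : {set T2})
  (H1 : k_oaf e1 S1 k1) (H2 : k_oaf e2 S2 k2) (k : int) :
  let d1 := (Posz (min_deg e1)) in let d2 := (Posz (min_deg e2)) in
  let D1 := (Posz (max_deg e1)) in let D2 := (Posz (max_deg e2)) in
  let k' := Num.max (k1 - d2) (Num.max (k2 - d1) (Num.min (k2 + D1) (k1 + D2)))%R in
  (k' <= k)%R -> (k <= D1 + D2)%R ->
  k_oaf (cart_rel e1 e2) [set x | (x.1 \in S1) || (x.2 \in S2)] k.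
Proof.
rewrite /= !ge_max ge_min => /and3P[hk1 hk2 /orP[hD1 | hD2]] _.
  exact: (union_oaf_cart irr1 irr2 H1 H2 hD1 hk1).
exact: (union_oaf_cart_swap irr1 irr2 H1 H2 hD2 hk2).
Qed.
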